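(* Let $F=\begin{pmatrix}-1&-1&-1\\-1&8&-1\\-1&-1&-1\end{pmatrix}$ (edge detect C filter). Then for all $m,n\in\mathbb{N}$, it is not the case that the equation $F*X=B$ with the periodic boundary condition, for unknown $X\in\mathbb{R}^{m\times n}$, has a unique solution for every $B\in\mathbb{R}^{m\times n}$.
   Context: For $F=[f_{ij}]\in\mathbb{R}^{3\times3}$ and $X=[x_{ij}]\in\mathbb{R}^{m\times n}$, the convolution $F*X\in\mathbb{R}^{m\times n}$ is defined by $[F*X]_{ij}=\sum_{l_1=1}^3\sum_{l_2=1}^3 f_{l_1l_2}\,x_{i-l_1+2,\,j-l_2+2}$ for $1\le i\le m$, $1\le j\le n$, where the periodic boundary condition sets $x_{0j}=x_{mj}$, $x_{m+1,j}=x_{1j}$, $x_{i0}=x_{in}$, $x_{i,n+1}=x_{i1}$ (for all indices $i\in\{0,\dots,m+1\}$, $j\in\{0,\dots,n+1\}$, so corners are also determined, e.g. $x_{00}=x_{mn}$). *)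

From HB Require Import structures.
From mathcomp Require Import all_boot all_order all_algebra.
Set Implicit Arguments. Unset Strict Implicit. Unset Printing Implicit Defensive.
Import Order.TTheory GRing.Theory Num.Theory.
Local Open Scope ring_scope.

(* Periodic index: for 0-based i : 'I_m and 0-based offset l : 'I_3, the
   0-based index (i - l + 1) mod m.  This is the 1-based index i - l1 + 2
   of the paper, wrapped periodically. *)
Definition pidx (m : nat) (i : 'I_m) (l : 'I_3) : 'I_m :=
  Ordinal (ltn_pmod (i + m + 1 - l)%N (leq_ltn_trans (leq0n i) (ltn_ord i))).

Definition conv (R : pzRingType) (m n : nat) (F : 'M[R]_3) (X : 'M[R]_(m, n))
  : 'M[R]_(m, n) :=
  \matrix_(i < m, j < n) \sum_(l1 < 3) \sum_(l2 < 3) F l1 l2 * X (pidx i l1) (pidx j l2).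

Definition edgeC (R : pzRingType) : 'M[R]_3 :=
  \matrix_(i < 3, j < 3) (if (i == 1 :> nat) && (j == 1 :> nat) then 8%:R else -1).

From mathcomp Require Import all_boot all_order all_algebra.
Import GRing.Theory Num.Theory.
Local Open Scope ring_scope.

(* The entries of the edge detect C filter sum to zero, so convolution with it
   annihilates every constant matrix; as it also annihilates the zero matrix,
   the equation with right-hand side 0 has two distinct solutions. *)

Section Convolution.

Variables (R : pzRingType) (m n : nat) (F : 'M[R]_3).

Lemma conv0 : conv F (0 : 'M[R]_(m, n)) = 0.
Proof.
apply/matrixP => i j; rewrite !mxE; apply: big1 => l1 _; apply: big1 => l2 _.
by rewrite mxE mulr0.
Qed.

Lemma conv_const_mx (a : R) :
  conv F (const_mx a : 'M[R]_(m, n)) = const_mx ((\sum_l1 \sum_l2 F l1 l2) * a).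
Proof.
apply/matrixP => i j; rewrite !mxE mulr_suml; apply: eq_bigr => l1 _.
by rewrite mulr_suml; apply: eq_bigr => l2 _; rewrite mxE.
Qed.

Lemma conv_not_uniquely_solvable (X0 : 'M[R]_(m, n)) :
  X0 != 0 -> conv F X0 = 0 -> ~ (forall B : 'M[R]_(m, n), exists! X, conv F X = B).
Proof.
move=> /eqP X0_neq0 FX0 /(_ 0) [X [_ X_unique]].
by apply: X0_neq0; rewrite -(X_unique _ FX0) (X_unique _ conv0).
Qed.

End Convolution.

Lemma edgeC_intr (R : pzRingType) (i j : 'I_3) : edgeC R i j = (edgeC int i j)%:~R.
Proof. by rewrite !mxE; case: ifP => _; rewrite ?mulrN1z. Qed.

Lemma edgeC_sum (R : pzRingType) : \sum_l1 \sum_l2 edgeC R l1 l2 = 0.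
Proof.
under eq_bigr => l1 _ do
  rewrite (eq_bigr _ (fun l2 _ => edgeC_intr R l1 l2)) -mulrz_sumr.
by rewrite -mulrz_sumr !big_ord_recr !big_ord0 !mxE.
Qed.

Lemma const_mx1_neq0 (R : nzRingType) {m n : nat} :
  (0 < m)%N -> (0 < n)%N -> (const_mx 1 : 'M[R]_(m, n)) != 0.
Proof.
move=> m_gt0 n_gt0; apply/eqP => /matrixP /(_ (Ordinal m_gt0) (Ordinal n_gt0)).
by rewrite !mxE; apply/eqP; rewrite oner_eq0.
Qed.

Theorem corollary14 (R : realFieldType) (m n : nat) (hm : (0 < m)%N) (hn : (0 < n)%N) :
  ~ (forall B : 'M[R]_(m, n), exists! X : 'M[R]_(m, n), conv (edgeC R) X = B).
Proof.
have kills_ones : conv (edgeC R) (const_mx 1 : 'M[R]_(m, n)) = 0.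
  by rewrite conv_const_mx edgeC_sum mul0r.
exact: conv_not_uniquely_solvable (const_mx1_neq0 R hm hn) kills_ones.
Qed.
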